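(* Let $p\in(0,1)$, let $(\mathcal M,d,0)$ be a finite pointed $p$-metric space and $0\in\mathcal N\subset\mathcal M$ such that $\mathrm{amen}_p(\mathcal N,\mathcal M)>\mathrm{amen}_p(\mathcal N,\mathcal M\setminus\{z\})$ for every $z\in\mathcal M\setminus\mathcal N$. Let $a\in\mathbb R^{\mathcal N\setminus\{0\}}$ and $T\in\mathcal T(\mathcal M)$ satisfy \[\mathrm{amen}_p(\mathcal N,\mathcal M)=\frac{\|\sum_{x\in\mathcal N\setminus\{0\}}a_x\delta(x)\|_{\mathcal F_p(\mathcal N)}}{T(a)}.\] If $\mathrm{leaf}(T)\ne\mathcal N\setminus\{0\}$, then there exist $\mathcal M'\subsetneq\mathcal M$ and $\mathcal N'\subset\mathcal M'$ with $|\mathcal N'|<|\mathcal N|$ (both with the restriction of $d$ and a common base point in $\mathcal N'$) such that $\mathrm{amen}_p(\mathcal N,\mathcal M)\le\mathrm{amen}_p(\mathcal N',\mathcal M')$.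
   Context: A $p$-metric space is a set with $d$ such that $d^p$ is a metric; pointed means a distinguished point. A $p$-Banach space is a complete vector space with a $p$-norm. For a pointed $p$-metric space with base point $0$, $\delta(x)$ is evaluation at $x$ on real functions vanishing at $0$, and $\mathcal F_p$ is the completion of $\mathrm{span}\{\delta(x)\}$ under $\|\sum a_i\delta(x_i)\|=\sup\|\sum a_if(x_i)\|_Y$ over $p$-Banach $Y$ and $1$-Lipschitz $f$ into $Y$ vanishing at $0$. For $0\in\mathcal N\subset\mathcal M$, $L_j:\mathcal F_p(\mathcal N)\to\mathcal F_p(\mathcal M)$ is the linear map $\delta_{\mathcal N}(x)\mapsto\delta_{\mathcal M}(x)$, and $\mathrm{amen}_p(\mathcal N,\mathcal M)=\|L_j^{-1}\|$ if $L_j$ is an isomorphism onto its range ($+\infty$ otherwise); this does not depend on the choice of base point in $\mathcal N$. $\mathcal T(\mathcal M)$ is the set of trees on $\mathcal M$ rooted at $0$; for $x\ne0$, $\mathrm{pred}_T(x)$ is the neighbour of $x$ on the path to $0$, $V_x^T$ the vertex set of the subtree rooted at $x$, $\mathrm{leaf}(T)$ the set of vertices $v$ with no $u$ such that $\mathrm{pred}_T(u)=v$. For $a\in\mathbb R^{\mathcal N\setminus\{0\}}$ extended by $0$ to $\mathcal M$, $T(a)=\big(\sum_{x\in\mathcal M\setminus\{0\}}|(\sum_{y\in V_x^T}a_y)d(\mathrm{pred}_T(x),x)|^p\big)^{1/p}$. *)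

From HB Require Import structures.
From mathcomp Require Import all_boot all_order all_algebra.
From mathcomp Require Import all_classical all_reals.
From mathcomp Require Import ereal exp.
Set Implicit Arguments. Unset Strict Implicit. Unset Printing Implicit Defensive.
Import Order.TTheory GRing.Theory Num.Theory.
Local Open Scope ring_scope.

Record pBanach (R : realType) (p : R) := PBanach {
  pb_car :> lmodType R;
  pb_norm : pb_car -> R;
  pb_norm_ge0 : forall x, 0 <= pb_norm x;
  pb_norm_eq0 : forall x, pb_norm x = 0 -> x = 0;
  pb_normZ : forall (c : R) x, pb_norm (c *: x) = `|c| * pb_norm x;
  pb_norm_ptri : forall x y,
      pb_norm (x + y) `^ p <= pb_norm x `^ p + pb_norm y `^ p;
  pb_complete : forall u : nat -> pb_car,
      (forall e : R, 0 < e -> exists N, forall n m, (N <= n)%N -> (N <= m)%N ->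
          pb_norm (u n - u m) < e) ->
      exists l, forall e : R, 0 < e -> exists N, forall n, (N <= n)%N ->
          pb_norm (u n - l) < e
}.

Definition is_pmetric (R : realType) (p : R) (T : Type) (d : T -> T -> R) :=
  [/\ forall x y, 0 <= d x y,
      forall x y, d x y = 0 <-> x = y,
      forall x y, d x y = d y x &
      forall x y z, d x z `^ p <= d x y `^ p + d y z `^ p].

Section Free.
Variables (R : realType) (p : R) (T : finType) (d : T -> T -> R).

(* Norm in F_p(S) (S with the restriction of d, base point b) of the
   element \sum_{x in S} a x delta(x)  (delta(b) = 0). *)
Definition fpnorm (S : {set T}) (b : T) (a : T -> R) : \bar R :=
  ereal_sup [set r%:E | r in
    [set r : R | exists (Y : pBanach p) (f : T -> Y),
        [/\ f b = 0,
            (forall x y, x \in S -> y \in S ->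
               pb_norm (f x - f y) <= d x y) &
            r = pb_norm (\sum_(x in S) a x *: f x)]]].

(* amen_p(N, M) (base point b in N) = ||L_j^{-1}||: the least constant C
   with ||mu||_{F_p(N)} <= C ||L_j mu||_{F_p(M)} for all mu in span
   {delta(x) : x in N}; +oo if no such constant exists. *)
Definition amen (b : T) (N M : {set T}) : \bar R :=
  ereal_inf [set C%:E | C in
    [set C : R | 0 <= C /\
       forall a : T -> R, (forall x, x \notin N \/ x = b -> a x = 0) ->
         (fpnorm N b a <= C%:E * fpnorm M b a)%E]].

(* Trees on T rooted at o, encoded by the predecessor map pr
   (pr x = pred_T(x) for x <> o, and pr o = o by convention):
   following predecessors from any vertex reaches the root. *)
Definition rooted_tree (o : T) (pr : T -> T) : Prop :=
  pr o = o /\ forall x, exists n, iter n pr x = o.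

Definition subtree (pr : T -> T) (x : T) : {set T} :=
  [set y | [exists n : 'I_#|T|.+1, iter n pr y == x]].

Definition leaves (o : T) (pr : T -> T) : {set T} :=
  [set v | [forall u, (u != o) ==> (pr u != v)]].

Definition tree_val (o : T) (pr : T -> T) (a : T -> R) : R :=
  (\sum_(x | x != o) `| (\sum_(y in subtree pr x) a y) * d (pr x) x | `^ p)
    `^ p^-1.

End Free.

(* Write S_y(c) for the sum of c over the subtree V_y of T, and let A be a set of
   vertices, all reaching the vertex b along T, that is closed under pred_T away
   from b.  For f 1-Lipschitz into a p-Banach space with f(b) = 0, Abel summation
   along T gives
     sum_{z in A} c_z f(z) = sum_{y in A, y <> b} S_y(c) (f(y) - f(pred_T y)),
   so by the p-triangle inequality the F_p(A)-norm of sum c_z delta(z) is at most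
   (sum_{y in A, y <> b} |S_y(c) d(pred_T y, y)|^p)^(1/p); for A = M and b = 0
   this is T(a).
   If a leaf v of T lies outside N, then M \ {v} is still such a set, so every
   constant admissible for amen_p(N, M \ {v}) bounds the ratio ||a|| / T(a) =
   amen_p(N, M), contradicting amen_p(N, M) > amen_p(N, M \ {v}).  (If 0 itself
   is a leaf, T has no edges and T(a) = 0.)
   Otherwise some x in N \ {0} is not a leaf.  Cut T at x into the trunk
   M \ (V_x \ {x}), rooted at 0, and the branch V_x, rooted at x, and cut a
   accordingly, moving the mass of a on V_x \ {x} onto x.  This preserves every
   subtree sum, hence the terms of T(a)^p split between the two pieces, while
   sum a_z f(z) splits into a trunk sum of f and a branch sum of f - f(x).  If
   amen_p(N, M) exceeded the amenability constants of both pieces, the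
   p-triangle inequality would bound it by their maximum.  Both pieces contain
   fewer points of N: the branch misses 0, and the trunk misses a leaf below x,
   which lies in N. *)

From HB Require Import structures.
From mathcomp Require Import all_boot all_order all_algebra.
From mathcomp Require Import all_classical all_reals.
From mathcomp Require Import ereal exp.
Set Implicit Arguments. Unset Strict Implicit. Unset Printing Implicit Defensive.
Import Order.TTheory GRing.Theory Num.Theory.
Local Open Scope ring_scope.

Lemma notin_properT (T : finType) (A : {set T}) z : z \notin A -> A \proper [set: T].
Proof.
by move=> zA; rewrite finset.properT; apply: contraNneq zA => ->; apply: finset.in_setT.
Qed.

Lemma ltn_card_setI (T : finType) (A B : {set T}) z :
  z \in A -> z \notin B -> (#|A :&: B| < #|A|)%N.
Proof.
move=> zA zB; apply/proper_card/properP; split; first exact: finset.subsetIl.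
by exists z; rewrite // finset.in_setI (negbTE zB) andbF.
Qed.

Lemma sum_scale_support (R : pzRingType) (V : lmodType R) (I : finType) (A : {pred I})
    (c : I -> R) (G : I -> V) :
  (forall i, i \notin A -> c i = 0) -> \sum_(i in A) c i *: G i = \sum_i c i *: G i.
Proof.
move=> c0; rewrite [RHS](bigID (mem A)) /= [X in _ = _ + X]big1 ?addr0 // => i /c0->.
exact: scale0r.
Qed.

Section RootedTree.
Variables (T : finType) (pr : T -> T) (o : T).

Lemma mem_subtree y z : (z \in subtree pr y) = fconnect pr z y.
Proof.
rewrite inE; apply/existsP/idP => [[n /eqP <-]|zy]; first exact: fconnect_iter.
have n_lt : (findex pr z y < #|T|.+1)%N.
  by rewrite ltnS ltnW // (leq_trans (findex_max zy)) ?max_card.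
by exists (Ordinal n_lt); rewrite /= iter_findex.
Qed.

Lemma fconnect_total z x y :
  fconnect pr z x -> fconnect pr z y -> fconnect pr x y || fconnect pr y x.
Proof.
move=> /iter_findex <- /iter_findex <-.
case: (leqP (findex pr z x) (findex pr z y)) => [|/ltnW] le_xy.
  by rewrite -(subnK le_xy) iterD fconnect_iter.
by rewrite -(subnK le_xy) iterD fconnect_iter orbT.
Qed.

Definition is_subtree (b : T) (M : {set T}) : Prop :=
  (forall z, z \in M -> fconnect pr z b) /\
  (forall y, y \in M -> y != b -> pr y \in M).

Lemma is_subtree_subtree x : is_subtree x (subtree pr x).
Proof.
split=> [z|y]; rewrite !mem_subtree //.
by rewrite fconnect_eqVf => /orP[/eqP-> /eqP|].
Qed.

Hypothesis tree : rooted_tree o pr.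

Lemma fconnect_root z : fconnect pr z o.
Proof. by have [n <-] := tree.2 z; apply: fconnect_iter. Qed.

Lemma fconnect_rootE z : fconnect pr o z = (z == o).
Proof.
by apply/idP/eqP => [/iter_findex <-|->]; [apply: iter_fix tree.1|apply: connect0].
Qed.

Lemma not_fconnect_pred y : y != o -> ~~ fconnect pr (pr y) y.
Proof.
(* A cycle through y makes the pr-orbit of y periodic, so it avoids the fixed root. *)
move=> yo; apply/negP => /iter_findex; set n := findex _ _ _ => cyc.
have iter_cyc m : iter (m * n.+1) pr y = y.
  by elim: m => // m IHm; rewrite mulSn iterD IHm iterSr cyc.
have [k yk] := tree.2 y.
have : iter (k * n.+1) pr y = o.
  by rewrite -(subnK (leq_pmulr k (ltn0Sn n))) iterD yk iter_fix // tree.1.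
by rewrite iter_cyc => y_o; rewrite y_o eqxx in yo.
Qed.

Lemma root_notin_subtree x : x != o -> o \notin subtree pr x.
Proof. by rewrite mem_subtree fconnect_rootE. Qed.

Lemma subtree_child_proper u : u != o -> subtree pr u \proper subtree pr (pr u).
Proof.
move=> uo; apply/properP; split.
  apply/fintype.subsetP => z; rewrite !mem_subtree => zu.
  exact: connect_trans zu (fconnect1 _ _).
by exists (pr u); rewrite !mem_subtree ?connect0 // not_fconnect_pred.
Qed.

Lemma leaf_in_subtree y : exists2 w, w \in leaves o pr & w \in subtree pr y.
Proof.
have yy : y \in subtree pr y by rewrite mem_subtree connect0.
case: (@arg_minnP _ y (fun w => w \in subtree pr y) (fun w => #|subtree pr w|) yy).
move=> w wy w_min.
exists w => //; rewrite inE; apply/forallP => u; apply/implyP => uo.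
apply/eqP => uw; have uy : u \in subtree pr y.
  move: wy; rewrite !mem_subtree -uw; apply: connect_trans; apply: fconnect1.
by have := w_min u uy; rewrite leqNgt -uw proper_card // subtree_child_proper.
Qed.

Lemma leaf_below x :
  x \notin leaves o pr -> exists2 w, w \in leaves o pr & w \in subtree pr x :\ x.
Proof.
rewrite inE negb_forall => /existsP[u]; rewrite negb_imply negbK.
move=> /andP[uo /eqP <-]; have [w wL wu] := leaf_in_subtree u.
exists w => //; rewrite in_setD1 !mem_subtree in wu *.
rewrite (connect_trans wu (fconnect1 _ _)) andbT.
by apply: contraNneq (not_fconnect_pred uo) => <-.
Qed.

Lemma root_leaf_trivial : o \in leaves o pr -> forall z, z = o.
Proof.
rewrite inE => /forallP oL z; have [n] := tree.2 z.
elim: n z => // n IHn z; rewrite iterSr => /IHn pz_o.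
by apply/eqP; apply: contraT => zo; have /implyP/(_ zo) := oL z; rewrite pz_o eqxx.
Qed.

Lemma is_subtree_acyclic b M y :
  is_subtree b M -> y \in M -> y != b -> ~~ fconnect pr (pr y) y.
Proof.
move=> [Mb _] yM yb; apply: not_fconnect_pred; apply: contra_neq yb => yo.
by have := Mb y yM; rewrite yo fconnect_rootE => /eqP.
Qed.

Lemma is_subtree_setD1_leaf v : v \in leaves o pr -> is_subtree o ([set: T] :\ v).
Proof.
rewrite inE => /forallP vL; split=> [z _|y _ yo]; first exact: fconnect_root.
by rewrite in_setD1 finset.in_setT andbT; have /implyP := vL y; apply.
Qed.

Lemma is_subtree_compl x : is_subtree o (~: (subtree pr x :\ x)).
Proof.
split=> [z _|y]; first exact: fconnect_root.
rewrite !finset.in_setC => yV yo; apply: contra yV; rewrite !in_setD1 !mem_subtree.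
move=> /andP[pyx pyV]; rewrite fconnect_eqVf pyV orbT andbT.
by apply/eqP => y_x; have := not_fconnect_pred yo; rewrite {2}y_x pyV.
Qed.

Lemma sum_path_telescope (V : zmodType) (F : T -> V) b M z :
  is_subtree b M -> z \in M ->
  \sum_(y in M | (y != b) && fconnect pr z y) (F y - F (pr y)) = F z - F b.
Proof.
move=> subM; have [Mb Mpr] := subM.
have sum_b : \sum_(y in M | (y != b) && fconnect pr b y) (F y - F (pr y)) = 0.
  apply: big_pred0 => y; apply/negP => /and3P[yM yb by_].
  have := Mb y yM; rewrite fconnect_eqVf (negbTE yb) /= => pyb.
  by have := is_subtree_acyclic subM yM yb; rewrite (connect_trans pyb by_).
move=> zM; have [n] : exists n, iter n pr z = b.
  by exists (findex pr z b); apply/iter_findex/Mb.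
elim: n z zM => [|n IHn] z zM; have [-> _|zb] := eqVneq z b; rewrite ?sum_b ?subrr //.
  by move=> /= zb'; rewrite zb' eqxx in zb.
rewrite iterSr => /(IHn _ (Mpr z zM zb)) sum_pz.
rewrite -(subrK (F (pr z)) (F z)) -addrA -sum_pz (bigD1 z) /= ?zM ?zb ?connect0 //.
congr (_ + _); apply: eq_bigl => y.
rewrite [fconnect pr z y]fconnect_eqVf; have [->|_] := eqVneq y z; last by rewrite andbT.
by rewrite andbF (negbTE (is_subtree_acyclic subM zM zb)) !andbF.
Qed.

Lemma sum_subtree_abel (R : pzRingType) (V : lmodType R) (f : T -> V) (c : T -> R) b M :
  is_subtree b M -> (forall z, z \notin M -> c z = 0) -> f b = 0 ->
  \sum_(z in M) c z *: f z =
  \sum_(y in M | y != b) (\sum_(z in subtree pr y) c z) *: (f y - f (pr y)).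
Proof.
move=> subM c_supp fb; symmetry.
under eq_bigr do rewrite scaler_suml big_mkcond /=.
rewrite exchange_big /= [RHS]big_mkcond /=; apply: eq_bigr => z _.
rewrite -big_mkcondr /= -scaler_sumr.
have [zM|zM] := boolP (z \in M); last by rewrite c_supp // !scale0r.
have := sum_path_telescope f subM zM; rewrite fb subr0 => <-.
by congr (_ *: _); apply: eq_bigl => y; rewrite mem_subtree andbA.
Qed.

Section BranchCut.
Variables (R : pzRingType) (x : T) (a : T -> R).

Definition branch_part (z : T) : R := if z \in subtree pr x :\ x then a z else 0.

Definition trunk_part (z : T) : R :=
  a z - branch_part z + (z == x)%:R * \sum_y branch_part y.

Lemma sum_trunk_part (A : {set T}) :
  \sum_(z in A) trunk_part z =
  \sum_(z in A) a z - \sum_(z in A) branch_part z + (x \in A)%:R * \sum_y branch_part y.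
Proof.
rewrite big_split sumrB /= -big_distrl /=; congr (_ + _ * _).
have [xA|xA] := boolP (x \in A).
  by rewrite (bigD1 x) //= eqxx big1 ?addr0 // => z /andP[_ /negbTE->].
by rewrite big1 // => z zA; case: eqP zA xA => // -> ->.
Qed.

Lemma sum_subtree_branch_part y :
  y \in subtree pr x -> y != x ->
  \sum_(z in subtree pr y) branch_part z = \sum_(z in subtree pr y) a z.
Proof.
move=> yV yx; have acyc := is_subtree_acyclic (is_subtree_subtree x) yV yx.
apply: eq_bigr => z zy; rewrite /branch_part ifT // in_setD1.
rewrite mem_subtree in yV; rewrite mem_subtree in zy.
rewrite mem_subtree (connect_trans zy yV) andbT.
apply: contraNneq acyc => zx; rewrite fconnect_eqVf (negbTE yx) /= in yV.
by apply: connect_trans yV _; rewrite -zx.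
Qed.

Lemma sum_subtree_trunk_part y :
  y \notin subtree pr x :\ x ->
  \sum_(z in subtree pr y) trunk_part z = \sum_(z in subtree pr y) a z.
Proof.
move=> yV; rewrite sum_trunk_part mem_subtree.
have [xy|xy] := boolP (fconnect pr x y).
  suff -> : \sum_(z in subtree pr y) branch_part z = \sum_z branch_part z.
    by rewrite /= mul1r subrK.
  rewrite [RHS](bigID (mem (subtree pr y))) /= [X in _ = _ + X]big1 ?addr0 // => z zy.
  rewrite /branch_part ifN // in_setD1 !mem_subtree negb_and.
  by apply/orP; right; apply: contra zy => zx; rewrite mem_subtree (connect_trans zx xy).
rewrite mul0r addr0 [X in _ - X]big1 ?subr0 // => z zy; rewrite /branch_part ifN //.
rewrite mem_subtree in zy; rewrite in_setD1 mem_subtree; apply/andP => -[_ zx].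
case/orP: (fconnect_total zx zy) => [|yx]; first exact/negP.
move: yV; rewrite in_setD1 mem_subtree yx andbT negbK => /eqP y_x.
by rewrite y_x connect0 in xy.
Qed.

Lemma sum_branch_cut (W : nmodType) (G : T -> R -> W) :
  \sum_(y in ~: (subtree pr x :\ x) | y != o)
      G y (\sum_(z in subtree pr y) trunk_part z) +
  \sum_(y in subtree pr x | y != x) G y (\sum_(z in subtree pr y) branch_part z) =
  \sum_(y | y != o) G y (\sum_(z in subtree pr y) a z).
Proof.
rewrite [RHS](bigID (mem (subtree pr x :\ x))) /= addrC; congr (_ + _).
  apply: eq_big => [y|y /andP[yV _]].
    by rewrite finset.in_setC andbC.
  by rewrite sum_subtree_trunk_part // -finset.in_setC.
apply: eq_big => [y|y /andP[yV yx]]; last by rewrite sum_subtree_branch_part.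
rewrite in_setD1; have [->|_] := eqVneq y o; last by rewrite andbC.
by rewrite mem_subtree fconnect_rootE; case: eqP => // ->; rewrite eqxx.
Qed.

Lemma sum_trunk_branch (V : lmodType R) (f : T -> V) :
  \sum_z a z *: f z = \sum_z trunk_part z *: f z + \sum_z branch_part z *: (f z - f x).
Proof.
set s := \sum_z branch_part z.
have -> : \sum_z trunk_part z *: f z =
    \sum_z a z *: f z - \sum_z branch_part z *: f z + s *: f x.
  rewrite /trunk_part; under eq_bigr do rewrite scalerDl scalerBl.
  have delta : \sum_z ((z == x)%:R * s) *: f z = s *: f x.
    rewrite (bigD1 x) //= eqxx mul1r big1 ?addr0 // => z /negbTE->.
    by rewrite mul0r scale0r.
  by rewrite big_split sumrB /= delta.
have -> : \sum_z branch_part z *: (f z - f x) = \sum_z branch_part z *: f z - s *: f x.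
  by under eq_bigr do rewrite scalerBr; rewrite sumrB -scaler_suml.
by rewrite addrA (addrAC _ (s *: f x)) subrK addrK.
Qed.

Lemma trunk_part_eq0 (N : {set T}) z :
  (forall z, z \notin N \/ z = o -> a z = 0) -> x \in N -> x != o ->
  z \notin N :&: ~: (subtree pr x :\ x) \/ z = o -> trunk_part z = 0.
Proof.
move=> a_supp xN xo z_out; rewrite /trunk_part /branch_part; case: ifPn => zV.
  by move: zV; rewrite subrr add0r in_setD1 => /andP[/negbTE-> _]; rewrite mul0r.
have zx : z != x.
  case: z_out => [|->]; last by rewrite eq_sym.
  by rewrite finset.in_setI finset.in_setC zV andbT; apply: contraNneq => ->.
rewrite subr0 (negbTE zx) mul0r addr0; apply: a_supp.
by case: z_out => [|->]; [rewrite finset.in_setI finset.in_setC zV andbT; left|right].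
Qed.

Lemma branch_part_eq0 (N : {set T}) z :
  (forall z, z \notin N -> a z = 0) ->
  z \notin N :&: subtree pr x \/ z = x -> branch_part z = 0.
Proof.
move=> a_supp z_out; rewrite /branch_part; case: ifPn => // /[!in_setD1] /andP[zx zV].
apply: a_supp; case: z_out => [|zx']; last by rewrite zx' eqxx in zx.
by rewrite finset.in_setI zV andbT.
Qed.

Lemma sum_trunk_branch_in (V : lmodType R) (N : {set T}) (f : T -> V) :
  (forall z, z \notin N \/ z = o -> a z = 0) -> x \in N -> x != o ->
  \sum_(z in N) a z *: f z =
  \sum_(z in N :&: ~: (subtree pr x :\ x)) trunk_part z *: f z +
  \sum_(z in N :&: subtree pr x) branch_part z *: (f z - f x).
Proof.
move=> a_supp xN xo; have a_suppN z (zN : z \notin N) := a_supp z (or_introl zN).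
rewrite (sum_scale_support _ a_suppN) sum_trunk_branch.
rewrite -(sum_scale_support _ (fun z zN => trunk_part_eq0 a_supp xN xo (or_introl zN))).
by rewrite -(sum_scale_support _ (fun z zN => branch_part_eq0 a_suppN (or_introl zN))).
Qed.

End BranchCut.

End RootedTree.

Section PBanachNorm.
Variables (R : realType) (p : R) (Y : pBanach p).

Lemma pb_norm0 : pb_norm (0 : Y) = 0.
Proof. by rewrite -(scale0r (0 : Y)) pb_normZ normr0 mul0r. Qed.

Lemma pb_distC (y z : Y) : pb_norm (y - z) = pb_norm (z - y).
Proof. by rewrite -[y - z]opprB -[- (z - y)]scaleN1r pb_normZ normrN1 mul1r. Qed.

Lemma pb_norm_sum_powR (I : finType) (P : pred I) (v : I -> Y) : 0 < p ->
  pb_norm (\sum_(i | P i) v i) `^ p <= \sum_(i | P i) pb_norm (v i) `^ p.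
Proof.
move=> p_gt0; apply: (big_rec2 (fun y s => pb_norm y `^ p <= s)).
  by rewrite pb_norm0 powR0 ?gt_eqF.
by move=> i y s _ ys; apply: le_trans (pb_norm_ptri _ _) _; rewrite lerD2l.
Qed.

End PBanachNorm.

Section PowRInv.
Variables (R : realType) (p : R).
Hypothesis p_gt0 : 0 < p.

Lemma le_powRV (r Q : R) : 0 <= r -> 0 <= Q -> (r <= Q `^ p^-1) = (r `^ p <= Q).
Proof.
have [pV_ge0 p_neq0] : 0 <= p^-1 /\ p != 0 by rewrite invr_ge0 ltW ?gt_eqF.
move=> r_ge0 Q_ge0; apply/idP/idP => [|rQ].
  move=> /(ge0_ler_powR (ltW p_gt0)); rewrite -powRrM mulVf // powRr1 //; apply.
    by rewrite nnegrE.
  by rewrite nnegrE powR_ge0.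
rewrite -(powRr1 r_ge0) -(mulfV p_neq0) powRrM.
by apply: ge0_ler_powR rQ; rewrite ?nnegrE ?powR_ge0.
Qed.

Lemma le_mul_powRV (r K Q : R) : 0 <= r -> 0 <= K -> 0 <= Q ->
  (r <= K * Q `^ p^-1) = (r `^ p <= K `^ p * Q).
Proof.
move=> r_ge0 K_ge0 Q_ge0.
rewrite -le_powRV ?mulr_ge0 ?powR_ge0 // powRM ?powR_ge0 // -powRrM.
by rewrite mulfV ?gt_eqF // powRr1.
Qed.

End PowRInv.

Section FreeSpace.
Variables (R : realType) (p : R) (T : finType) (d : T -> T -> R).

Definition lipschitz1_on (Y : pBanach p) (S : {set T}) (f : T -> Y) : Prop :=
  forall x y, x \in S -> y \in S -> pb_norm (f x - f y) <= d x y.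

Lemma lipschitz1_onS (Y : pBanach p) (A S : {set T}) (f : T -> Y) :
  A \subset S -> lipschitz1_on S f -> lipschitz1_on A f.
Proof. by move=> /fintype.subsetP AS f_lip x y /AS xS /AS; apply: f_lip. Qed.

Lemma lipschitz1_on_subr (Y : pBanach p) (S : {set T}) (f : T -> Y) (x : T) :
  lipschitz1_on S f -> lipschitz1_on S (fun z => f z - f x).
Proof. by move=> f_lip y z yS zS; rewrite opprB addrA subrK; apply: f_lip. Qed.

Lemma fpnorm_ub (S : {set T}) b c (Y : pBanach p) (f : T -> Y) :
  f b = 0 -> lipschitz1_on S f ->
  ((pb_norm (\sum_(x in S) c x *: f x))%:E <= fpnorm p d S b c)%E.
Proof.
move=> fb f_lip; apply: ereal_sup_ubound.
by exists (pb_norm (\sum_(x in S) c x *: f x)) => //; exists Y, f.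
Qed.

Lemma fpnorm_le (S : {set T}) b c (r : R) :
  (forall (Y : pBanach p) (f : T -> Y), f b = 0 -> lipschitz1_on S f ->
     pb_norm (\sum_(x in S) c x *: f x) <= r) ->
  (fpnorm p d S b c <= r%:E)%E.
Proof.
by move=> ub; apply: ge_ereal_sup => _ [_ [Y [f [fb f_lip ->]]] <-]; rewrite lee_fin ub.
Qed.

Definition amen_const (b : T) (N M : {set T}) (C : R) : Prop :=
  0 <= C /\ forall a : T -> R, (forall x, x \notin N \/ x = b -> a x = 0) ->
    (fpnorm p d N b a <= C%:E * fpnorm p d M b a)%E.

Lemma amen_ltP b (N M : {set T}) (u : \bar R) :
  (amen p d b N M < u)%E -> exists2 C, amen_const b N M C & (C%:E < u)%E.
Proof. by move=> /ereal_inf_lt[_ [C CA <-] Cu]; exists C. Qed.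

Lemma amen_le_ratio b (N M : {set T}) a (t K : R) : 0 < t ->
  amen p d b N M = (fpnorm p d N b a / t%:E)%E ->
  (forall (Y : pBanach p) (f : T -> Y), f b = 0 -> lipschitz1_on N f ->
     pb_norm (\sum_(x in N) a x *: f x) <= K * t) ->
  (amen p d b N M <= K%:E)%E.
Proof.
by move=> t_gt0 -> ub; rewrite inver gt_eqF // lee_pdivrMr // -EFinM; apply: fpnorm_le.
Qed.

Variables (pr : T -> T) (o : T).

Definition tree_cost (b : T) (M : {set T}) (c : T -> R) : R :=
  \sum_(y in M | y != b) `|(\sum_(z in subtree pr y) c z) * d (pr y) y| `^ p.

Lemma tree_valE a : tree_val p d o pr a = tree_cost o [set: T] a `^ p^-1.
Proof. by congr (_ `^ _); apply: eq_bigl => y; rewrite finset.in_setT. Qed.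

Lemma tree_cost_ge0 b M c : 0 <= tree_cost b M c.
Proof. by apply: sumr_ge0 => y _; apply: powR_ge0. Qed.

Lemma tree_cost_subset b (M M' : {set T}) c :
  M \subset M' -> tree_cost b M c <= tree_cost b M' c.
Proof.
move=> /fintype.subsetP MM'; rewrite /tree_cost [leLHS]big_mkcond [leRHS]big_mkcond.
apply: ler_sum => y _; case: ifPn => [/andP[/MM' yM' yb]|_]; first by rewrite yM' yb.
by case: ifP => // _; apply: powR_ge0.
Qed.

Hypothesis tree : rooted_tree o pr.

Lemma tree_cost_cut x a :
  tree_cost o (~: (subtree pr x :\ x)) (trunk_part pr x a) +
  tree_cost x (subtree pr x) (branch_part pr x a) = tree_cost o [set: T] a.
Proof.
rewrite /tree_cost (sum_branch_cut tree x a (fun y s => `|s * d (pr y) y| `^ p)).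
by apply: eq_bigl => y; rewrite finset.in_setT.
Qed.

Lemma tree_cost_root_leaf M c : o \in leaves o pr -> tree_cost o M c = 0.
Proof.
by move=> oL; apply: big_pred0 => y; rewrite (root_leaf_trivial tree oL y) eqxx andbF.
Qed.

Hypothesis p_gt0 : 0 < p.

Lemma fpnorm_le_tree_cost b (M : {set T}) c :
  is_subtree pr b M -> (forall z, z \notin M -> c z = 0) ->
  (fpnorm p d M b c <= (tree_cost b M c `^ p^-1)%:E)%E.
Proof.
move=> subM c_supp; apply: fpnorm_le => Y f fb f_lip.
rewrite (sum_subtree_abel tree subM c_supp fb) le_powRV ?pb_norm_ge0 ?tree_cost_ge0 //.
apply: le_trans (pb_norm_sum_powR _ _ p_gt0) _; apply: ler_sum => y /andP[yM yb].
apply: ge0_ler_powR; rewrite ?nnegrE ?pb_norm_ge0 ?normr_ge0 //; first exact: ltW.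
rewrite pb_normZ normrM ler_wpM2l // pb_distC.
exact: le_trans (f_lip _ _ (subM.2 y yM yb) yM) (ler_norm _).
Qed.

Lemma norm_sum_le_amen_const b (N M : {set T}) C c (Y : pBanach p) (f : T -> Y) :
  is_subtree pr b M -> N \subset M -> amen_const b N M C ->
  (forall z, z \notin N \/ z = b -> c z = 0) -> f b = 0 -> lipschitz1_on N f ->
  pb_norm (\sum_(x in N) c x *: f x) <= C * tree_cost b M c `^ p^-1.
Proof.
move=> subM /fintype.subsetP NM [C_ge0 CA] c_supp fb f_lip.
rewrite -lee_fin EFinM; apply: le_trans (fpnorm_ub c fb f_lip) _.
apply: le_trans (CA c c_supp) _; apply: lee_wpmul2l; first by rewrite lee_fin.
apply: fpnorm_le_tree_cost subM _ => z zM; apply: c_supp; left.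
by apply: contra zM; apply: NM.
Qed.

End FreeSpace.

Section Reduction.
Variables (R : realType) (p : R) (T : finType) (d : T -> T -> R) (pr : T -> T) (o : T).
Variables (N : {set T}) (a : T -> R).
Hypotheses (tree : rooted_tree o pr) (p_gt0 : 0 < p).
Hypothesis a_supp : forall x, x \notin N \/ x = o -> a x = 0.

Let cost := tree_cost p d pr o [set: T] a `^ p^-1.

Lemma norm_sum_le_leaf_removed v C (Y : pBanach p) (f : T -> Y) :
  v \in leaves o pr -> v \notin N -> amen_const p d o N ([set: T] :\ v) C ->
  f o = 0 -> lipschitz1_on d N f ->
  pb_norm (\sum_(x in N) a x *: f x) <= C * cost.
Proof.
move=> vL vN CA fo f_lip.
have NM : N \subset [set: T] :\ v.
  apply/fintype.subsetP => z zN; rewrite in_setD1 finset.in_setT andbT.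
  by apply: contraNneq vN => <-.
have subM := is_subtree_setD1_leaf tree vL.
apply: le_trans (norm_sum_le_amen_const tree p_gt0 subM NM CA a_supp fo f_lip) _.
apply: ler_wpM2l; first by case: CA.
apply: ge0_ler_powR; rewrite ?nnegrE ?invr_ge0 ?tree_cost_ge0 ?(ltW p_gt0) //.
exact/tree_cost_subset/finset.subsetT.
Qed.

Lemma amen_le_leaf_removed v :
  v \in leaves o pr -> v \notin N -> 0 < cost ->
  amen p d o N [set: T] = (fpnorm p d N o a / cost%:E)%E ->
  (amen p d o N [set: T] <= amen p d o N ([set: T] :\ v))%E.
Proof.
move=> vL vN cost_gt0 amenE; rewrite leNgt; apply/negP => /amen_ltP[C CA C_lt].
have := amen_le_ratio cost_gt0 amenE
  (fun Y f => norm_sum_le_leaf_removed vL vN CA (f := f)).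
by rewrite leNgt C_lt.
Qed.

Lemma norm_sum_le_cut x C1 C2 (Y : pBanach p) (f : T -> Y) :
  x \in N -> x != o ->
  amen_const p d o (N :&: ~: (subtree pr x :\ x)) (~: (subtree pr x :\ x)) C1 ->
  amen_const p d x (N :&: subtree pr x) (subtree pr x) C2 ->
  f o = 0 -> lipschitz1_on d N f ->
  pb_norm (\sum_(z in N) a z *: f z) <= Num.max C1 C2 * cost.
Proof.
move=> xN xo C1A C2A fo f_lip.
set M1 := ~: (subtree pr x :\ x).
set a1 := trunk_part pr x a; set a2 := branch_part pr x a.
have a1_supp z : z \notin N :&: M1 \/ z = o -> a1 z = 0 := trunk_part_eq0 a_supp xN xo.
have a2_supp z : z \notin N :&: subtree pr x \/ z = x -> a2 z = 0.
  by apply: branch_part_eq0 => y yN; apply: a_supp; left.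
have norm1 := norm_sum_le_amen_const tree p_gt0 (is_subtree_compl tree x)
  (finset.subsetIr N M1) C1A a1_supp fo (lipschitz1_onS (finset.subsetIl _ _) f_lip).
have norm2 := norm_sum_le_amen_const tree p_gt0 (is_subtree_subtree pr x)
  (finset.subsetIr _ _) C2A a2_supp (subrr (f x))
  (lipschitz1_onS (finset.subsetIl _ _) (lipschitz1_on_subr x f_lip)).
have K_ge0 : 0 <= Num.max C1 C2 by rewrite le_max C1A.1.
rewrite (sum_trunk_branch_in pr f a_supp xN xo) /cost.
rewrite le_mul_powRV ?pb_norm_ge0 ?tree_cost_ge0 //.
have le_part (r Q C : R) : 0 <= r -> 0 <= Q -> C <= Num.max C1 C2 ->
    r <= C * Q `^ p^-1 -> r `^ p <= Num.max C1 C2 `^ p * Q.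
  move=> r_ge0 Q_ge0 CK /le_trans; rewrite -le_mul_powRV //; apply.
  by apply: ler_wpM2r => //; apply: powR_ge0.
apply: le_trans (pb_norm_ptri _ _) _; rewrite -(tree_cost_cut p d tree x) mulrDr.
apply: lerD; [apply: (le_part _ _ _ _ _ _ norm1)|apply: (le_part _ _ _ _ _ _ norm2)];
  by [apply: pb_norm_ge0|apply: tree_cost_ge0|rewrite le_max lexx ?orbT].
Qed.

Lemma amen_le_cut x :
  x \in N -> x != o -> 0 < cost ->
  amen p d o N [set: T] = (fpnorm p d N o a / cost%:E)%E ->
  (amen p d o N [set: T] <=
     amen p d o (N :&: ~: (subtree pr x :\ x)) (~: (subtree pr x :\ x)))%E
  \/ (amen p d o N [set: T] <= amen p d x (N :&: subtree pr x) (subtree pr x))%E.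
Proof.
move=> xN xo cost_gt0 amenE.
have [|/amen_ltP[C1 C1A C1_lt]] := leP; first by left.
have [|/amen_ltP[C2 C2A C2_lt]] := leP; first by right.
have := amen_le_ratio cost_gt0 amenE (fun Y f => norm_sum_le_cut xN xo C1A C2A (f := f)).
by rewrite leNgt EFin_max gt_max C1_lt C2_lt.
Qed.

End Reduction.

Theorem proposition3p14 (R : realType) (p : R) (T : finType)
    (d : T -> T -> R) (o : T) (N : {set T}) (a : T -> R) (pr : T -> T) :
  0 < p < 1 ->
  is_pmetric p d ->
  o \in N ->
  (forall z, z \notin N ->
     (amen p d o N [set: T] > amen p d o N ([set: T] :\ z))%E) ->
  (forall x, x \notin N \/ x = o -> a x = 0) ->
  rooted_tree o pr ->
  0 < tree_val p d o pr a ->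
  amen p d o N [set: T] = (fpnorm p d N o a / (tree_val p d o pr a)%:E)%E ->
  leaves o pr != N :\ o ->
  exists (M' N' : {set T}) (b : T),
    [/\ M' \proper [set: T], N' \subset M', b \in N',
        (#|N'| < #|N|)%N &
        (amen p d o N [set: T] <= amen p d b N' M')%E].
Proof.
move=> /andP[p_gt0 _] _ oN amen_del a_supp tree cost_gt0 amenE leavesN.
rewrite tree_valE in cost_gt0 amenE.
have leaves_sub : leaves o pr \subset N :\ o.
  apply/fintype.subsetP => v vL; rewrite in_setD1; apply/andP; split.
    apply: contraTneq cost_gt0 => v_o; rewrite v_o in vL.
    by rewrite tree_cost_root_leaf // powR0 ?invr_neq0 ?gt_eqF // ltxx.
  apply: contraT => vN.
  have := amen_le_leaf_removed tree p_gt0 a_supp vL vN cost_gt0 amenE.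
  by rewrite leNgt amen_del.
have /properP[_ [x /[!in_setD1] /andP[xo xN] xL]] : leaves o pr \proper N :\ o.
  by rewrite finset.properEneq leavesN.
have [w wL /[!in_setD1] /andP[wx wV]] := leaf_below tree xL.
have wN : w \in N.
  by have := fintype.subsetP leaves_sub w wL; rewrite in_setD1 => /andP[].
have oV := root_notin_subtree tree xo.
case: (amen_le_cut tree p_gt0 a_supp xN xo cost_gt0 amenE) => le_amen.
  exists (~: (subtree pr x :\ x)), (N :&: ~: (subtree pr x :\ x)), o; split=> //.
  - by apply: (@notin_properT _ _ w); rewrite finset.in_setC in_setD1 wx wV.
  - exact: finset.subsetIr.
  - by rewrite finset.in_setI finset.in_setC in_setD1 (negbTE oV) andbF oN.
  - by apply: (ltn_card_setI wN); rewrite finset.in_setC in_setD1 wx wV.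
exists (subtree pr x), (N :&: subtree pr x), x; split=> //.
- exact: notin_properT oV.
- exact: finset.subsetIr.
- by rewrite finset.in_setI xN mem_subtree connect0.
- exact: ltn_card_setI oN oV.
Qed.
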